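(* Let $V\subseteq\mathbb{R}^n$ be convex, $F\colon V\to\mathbb{R}^n$ globally Lipschitz, and define $\tilde F\colon V^N\to\mathbb{R}^{nN}$ by $\tilde F(u)=(F(u_1)^T,\dots,F(u_N)^T)^T$ for $u=(u_1^T,\dots,u_N^T)^T$, $u_i\in V$. Let $D=\operatorname{diag}(d_1,\dots,d_n)$ with $d_i>0$, and let $L\in\mathbb{R}^{N\times N}$ be a graph Laplacian: symmetric, with nonpositive off-diagonal entries, and $L\mathbf{1}=0$. Fix $1\le p\le\infty$ and a positive diagonal $n\times n$ matrix $Q$, and let $c=M_{p,Q}[F]$. Then for any two continuously differentiable solutions $u,v\colon[0,\infty)\to V^N$ of \[ \dot u(t)=\tilde F(u(t))-(L\otimes D)u(t), \] we have $\|u(t)-v(t)\|_{p,Q}\le e^{ct}\|u(0)-v(0)\|_{p,Q}$ for all $t\ge0$.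
   Context: On $\mathbb{R}^n$, $\|x\|_{p,Q}=\|Qx\|_p$; on $\mathbb{R}^{nN}$, $\|u\|_{p,Q}=\big\|(\|Qu_1\|_p,\dots,\|Qu_N\|_p)^T\big\|_p$. The logarithmic Lipschitz constant is $M_{p,Q}[F]=\lim_{h\to0^+}\sup_{x\neq y\in V}\frac1h\left(\frac{\|x-y+h(F(x)-F(y))\|_{p,Q}}{\|x-y\|_{p,Q}}-1\right)$. $\mathbf{1}=(1,\dots,1)^T$ and $\otimes$ is the Kronecker product. *)

From HB Require Import structures.
From mathcomp Require Import all_boot all_order all_algebra.
From mathcomp Require Import all_classical all_reals all_analysis.
Set Implicit Arguments. Unset Strict Implicit. Unset Printing Implicit Defensive.
Import Order.TTheory GRing.Theory Num.Theory.
Import numFieldNormedType.Exports.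
Local Open Scope classical_set_scope.
Local Open Scope ring_scope.

(* Vectors of R^n are column vectors 'cV[R]_n.
   A vector u = (u_1^T,...,u_N^T)^T of R^{nN} is stored as the matrix
   'M[R]_(n, N) whose i-th column is u_i. *)

Section Defs.
Variable R : realType.

Definition pnorm (p : \bar R) (n : nat) (x : 'cV[R]_n) : R :=
  match p with
  | r%:E => (\sum_(i < n) `|x i ord0| `^ r) `^ r^-1
  | _ => \big[Num.max/0]_(i < n) `|x i ord0|
  end.

Definition pQnorm (p : \bar R) (n : nat) (Q : 'M[R]_n) (x : 'cV[R]_n) : R :=
  pnorm p (Q *m x).

Definition blockQnorm (p : \bar R) (n N : nat) (Q : 'M[R]_n) (u : 'M[R]_(n, N)) : R :=
  pnorm p (\col_(i < N) pQnorm p Q (col i u)).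

Definition convex_subset (n : nat) (V : set 'cV[R]_n) : Prop :=
  forall x y, V x -> V y -> forall l : R, 0 <= l <= 1 -> V (l *: x + (1 - l) *: y).

(* global Lipschitz continuity of F on V (w.r.t. the max norm; all norms equivalent) *)
Definition glob_lipschitz_on (n : nat) (V : set 'cV[R]_n) (F : 'cV[R]_n -> 'cV[R]_n) : Prop :=
  exists K : R, forall x y, V x -> V y -> `|F x - F y| <= K * `|x - y|.

Definition pos_diag (n : nat) (A : 'M[R]_n) : Prop :=
  is_diag_mx A /\ forall i, 0 < A i i.

Definition graph_laplacian (N : nat) (L : 'M[R]_N) : Prop :=
  [/\ L^T = L, (forall i j, i != j -> L i j <= 0) & L *m (const_mx 1 : 'cV[R]_N) = 0].

Definition logLip_quot (p : \bar R) (n : nat) (Q : 'M[R]_n)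
  (V : set 'cV[R]_n) (F : 'cV[R]_n -> 'cV[R]_n) (h : R) : \bar R :=
  ereal_sup [set r : \bar R | exists x y, [/\ V x, V y, x != y &
     r = (h^-1 * (pQnorm p Q (x - y + h *: (F x - F y)) / pQnorm p Q (x - y) - 1))%:E]].

Definition logLip_eq (p : \bar R) (n : nat) (Q : 'M[R]_n)
  (V : set 'cV[R]_n) (F : 'cV[R]_n -> 'cV[R]_n) (c : R) : Prop :=
  logLip_quot p Q V F h @[h --> 0^'+] --> c%:E.

Definition Ftilde (n N : nat) (F : 'cV[R]_n -> 'cV[R]_n) (u : 'M[R]_(n, N)) : 'M[R]_(n, N) :=
  \matrix_(k < n, i < N) F (col i u) k ord0.

Definition kron_apply (n N : nat) (L : 'M[R]_N) (D : 'M[R]_n) (u : 'M[R]_(n, N)) : 'M[R]_(n, N) :=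
  \matrix_(k < n, i < N) \sum_(j < N) \sum_(l < n) L i j * D k l * u l j.

Definition rhs (n N : nat) (F : 'cV[R]_n -> 'cV[R]_n) (L : 'M[R]_N) (D : 'M[R]_n)
  (u : 'M[R]_(n, N)) : 'M[R]_(n, N) := Ftilde F u - kron_apply L D u.

(* u : [0,oo) -> V^N is a continuously differentiable solution of
   u' = \tilde F(u) - (L ⊗ D) u.  Differentiable at every t > 0 with the ODE,
   right-differentiable at 0 with the ODE; the derivative t |-> rhs (u t) is
   then automatically continuous on [0,oo). *)
Definition is_ode_solution (n N : nat) (V : set 'cV[R]_n) (F : 'cV[R]_n -> 'cV[R]_n)
  (L : 'M[R]_N) (D : 'M[R]_n) (u : R -> 'M[R]_(n, N)) : Prop :=
  [/\ (forall t, 0 <= t -> forall i, V (col i (u t))),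
      (forall t, 0 < t -> derivable u t 1 /\ 'D_1 u t = rhs F L D (u t)) &
      (fun h => h^-1 *: (u h - u 0)) @ 0^'+ --> rhs F L D (u 0)].

End Defs.

From HB Require Import structures.
From mathcomp Require Import all_boot all_order all_algebra.
From mathcomp Require Import all_classical all_reals all_analysis.
From mathcomp Require Import ring lra.
Import Order.TTheory GRing.Theory Num.Theory.
Import numFieldNormedType.Exports.
Local Open Scope classical_set_scope.
Local Open Scope ring_scope.
Set Implicit Arguments. Unset Strict Implicit. Unset Printing Implicit Defensive.

(* The distance [phi t = ||u t - v t||_{p,Q}] has upper right Dini derivative
   at most [c phi t].  For small [h], the Euler step
   [w + h (Ftilde u - Ftilde v - (L ⊗ D) w)] of the difference [w] is the average
   of a reaction step [w + 2h (Ftilde u - Ftilde v)], whose norm is at most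
   [(1 + 2h (c + e)) ||w||] by the definition of [M_{p,Q}[F]] applied blockwise,
   and of a diffusion step [w - 2h (L ⊗ D) w].  The latter acts on the k-th
   components of the blocks through [I - 2h d_k L], a doubly stochastic matrix
   since [L] is a symmetric Laplacian, hence it does not increase any p-norm.
   A real-induction comparison argument turns [D^+ phi <= c phi] into
   [phi t <= exp (c t) phi 0]. *)

Section PowRConvexity.
Variable R : realType.

Lemma sum_powR_ge0 (I : finType) (f : I -> R) r : 0 <= \sum_i `|f i| `^ r.
Proof. by apply: sumr_ge0 => i _; apply: powR_ge0. Qed.

Lemma powRK (r x : R) : r != 0 -> 0 <= x -> (x `^ r) `^ r^-1 = x.
Proof. by move=> r0 x0; rewrite -powRrM mulfV // powRr1. Qed.

Lemma powRVK (r x : R) : r != 0 -> 0 <= x -> (x `^ r^-1) `^ r = x.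
Proof. by move=> r0 x0; rewrite -powRrM mulVf // powRr1. Qed.

Lemma powR_conv (r t x y : R) : 1 <= r -> 0 <= t <= 1 -> 0 <= x -> 0 <= y ->
  (t * x + (1 - t) * y) `^ r <= t * x `^ r + (1 - t) * y `^ r.
Proof.
move=> r1 /andP[t0 t1] x0 y0.
have := @convex_powR R r r1 (Itv01 t0 t1) x y; rewrite !convRE.
by apply; rewrite inE /= in_itv /= andbT.
Qed.

Lemma powR_mulr_le (r a x : R) : 1 <= r -> 0 <= a <= 1 -> 0 <= x ->
  (a * x) `^ r <= a * x `^ r.
Proof.
move=> r1 /andP[a0 a1] x0.
have [->|an0] := eqVneq a 0; first by rewrite !mul0r powR0 // gt_eqF // (lt_le_trans ltr01 r1).
by apply: ge1r_powRZ => //; rewrite lt0r an0 a0.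
Qed.

Lemma divDl_itv01 (a b : R) : 0 <= a -> 0 <= b -> 0 < a + b -> 0 <= a / (a + b) <= 1.
Proof. by move=> a0 b0 ab0; rewrite divr_ge0 ?(ltW ab0) //= ler_pdivrMr // mul1r lerDl. Qed.

Lemma powR_subconv (r a b x y : R) : 1 <= r -> 0 <= a -> 0 <= b -> a + b <= 1 ->
  0 <= x -> 0 <= y -> (a * x + b * y) `^ r <= a * x `^ r + b * y `^ r.
Proof.
move=> r1 a0 b0 ab1 x0 y0.
have [ab0|abn0] := eqVneq (a + b) 0.
  have [-> ->] : a = 0 /\ b = 0 by lra.
  by rewrite !mul0r addr0 powR0 // gt_eqF // (lt_le_trans ltr01 r1).
have abp : 0 < a + b by rewrite lt0r abn0 addr_ge0.
pose t := a / (a + b).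
have t01 : 0 <= t <= 1 by exact: divDl_itv01.
have t1E : 1 - t = b / (a + b) by rewrite /t; field.
have -> : a * x + b * y = (a + b) * (t * x + (1 - t) * y) by rewrite t1E /t; field.
have cx0 : 0 <= t * x + (1 - t) * y.
  by case/andP: t01 => t0 t1; rewrite addr_ge0 // mulr_ge0 // subr_ge0.
apply: (le_trans (powR_mulr_le r1 _ cx0)); first by rewrite (ltW abp).
apply: (le_trans (ler_wpM2l (ltW abp) (powR_conv r1 t01 x0 y0))).
suff -> : (a + b) * (t * x `^ r + (1 - t) * y `^ r) = a * x `^ r + b * y `^ r by [].
by rewrite t1E /t; field.
Qed.

Lemma jensen_powR (r : R) (m : nat) (lam x : 'I_m -> R) : 1 <= r ->
  (forall j, 0 <= lam j) -> (forall j, 0 <= x j) -> \sum_j lam j <= 1 ->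
  (\sum_j lam j * x j) `^ r <= \sum_j lam j * x j `^ r.
Proof.
move=> r1; elim: m lam x => [|m IH] lam x l0 x0 ls.
  by rewrite !big_ord0 powR0 // gt_eqF // (lt_le_trans ltr01 r1).
rewrite !big_ord_recl /=; rewrite big_ord_recl /= in ls.
set La := \sum_(i < m) lam (lift ord0 i) in ls *.
have La0 : 0 <= La by apply: sumr_ge0.
have [La_eq0|La_neq0] := eqVneq La 0.
  have lam0 i : lam (lift ord0 i) = 0.
    exact: (psumr_eq0P (P := predT) (F := fun i => lam (lift ord0 i))).
  rewrite !big1 ?addr0; try by move=> i _; rewrite lam0 mul0r.
  by apply: powR_mulr_le => //; rewrite l0; lra.
pose lam' i := lam (lift ord0 i) / La.
have lam'_ge0 j : 0 <= lam' j by rewrite divr_ge0.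
have lam'_sum : \sum_j lam' j <= 1 by rewrite -mulr_suml -/La mulfV.
set Y := \sum_j lam' j * x (lift ord0 j).
have Y0 : 0 <= Y by apply: sumr_ge0 => j _; rewrite mulr_ge0.
have -> : \sum_(i < m) lam (lift ord0 i) * x (lift ord0 i) = La * Y.
  by rewrite mulr_sumr; apply: eq_bigr => j _; rewrite /lam'; field.
have -> : \sum_(i < m) lam (lift ord0 i) * x (lift ord0 i) `^ r =
    La * \sum_j lam' j * x (lift ord0 j) `^ r.
  by rewrite mulr_sumr; apply: eq_bigr => j _; rewrite /lam'; field.
apply: (le_trans (powR_subconv r1 (l0 ord0) La0 ls (x0 ord0) Y0)).
by rewrite lerD2l ler_wpM2l // IH.
Qed.

(* Minkowski: [|f + g| / (a + b)] is a convex combination of [|f| / a] and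
   [|g| / b]. *)
Lemma minkowski_powR_sum (I : finType) (f g : I -> R) (r a b : R) :
  1 <= r -> 0 < a -> 0 < b ->
  \sum_i `|f i| `^ r = a `^ r -> \sum_i `|g i| `^ r = b `^ r ->
  \sum_i `|f i + g i| `^ r <= (a + b) `^ r.
Proof.
move=> r1 a0 b0 Sa Sb.
have r0 : 0 < r by apply: lt_le_trans r1.
have ab0 : 0 < a + b := addr_gt0 a0 b0.
have [a0' b0'] := (ltW a0, ltW b0).
pose t := a / (a + b).
have t01 : 0 <= t <= 1 by exact: divDl_itv01.
have t1E : 1 - t = b / (a + b) by rewrite /t; field; rewrite gt_eqF.
have termwise i : `|f i + g i| `^ r <=
    (a + b) `^ r * (t * (`|f i| / a) `^ r + (1 - t) * (`|g i| / b) `^ r).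
  have fa : 0 <= `|f i| / a by rewrite divr_ge0.
  have gb : 0 <= `|g i| / b by rewrite divr_ge0.
  apply: (le_trans (y := (`|f i| + `|g i|) `^ r)).
    by apply: ge0_ler_powR; rewrite ?nnegrE ?addr_ge0 ?ler_normD // ltW.
  have -> : `|f i| + `|g i| = (a + b) * (t * (`|f i| / a) + (1 - t) * (`|g i| / b)).
    by rewrite t1E /t; field; rewrite !gt_eqF.
  case/andP: (t01) => t0 t1.
  have cx0 : 0 <= t * (`|f i| / a) + (1 - t) * (`|g i| / b).
    by rewrite addr_ge0 // mulr_ge0 // subr_ge0.
  rewrite powRM ?(ltW ab0) //.
  by apply: ler_wpM2l; [exact: powR_ge0 | exact: powR_conv].
apply: (le_trans (ler_sum _ (fun i _ => termwise i))).
rewrite -mulr_sumr big_split /= -!mulr_sumr.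
have normalised (h : I -> R) c : 0 < c -> \sum_i `|h i| `^ r = c `^ r ->
    \sum_i (`|h i| / c) `^ r = 1.
  move=> c0 Sc; under eq_bigr do rewrite (powRM _ (normr_ge0 _)) ?invr_ge0 ?ltW //.
  by rewrite -mulr_suml Sc -powRM ?invr_ge0 ?ltW // mulfV ?gt_eqF // powR1.
by rewrite (normalised f a) ?(normalised g b) // !mulr1 subrKC mulr1.
Qed.

End PowRConvexity.

Section FinitePNorm.
Variable R : realType.

Lemma ge1_erealP (p : \bar R) : (1 <= p)%E ->
  (exists2 r : R, 1 <= r & p = r%:E) \/ p = +oo%E.
Proof. by case: p => [r||] p1; [left; exists r; rewrite -?lee_fin | right |]. Qed.

Definition fpnorm (p : \bar R) (I : finType) (f : I -> R) : R :=
  match p with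
  | r%:E => (\sum_i `|f i| `^ r) `^ r^-1
  | _ => \big[Num.max/0]_i `|f i|
  end.

Lemma bigmax_normr_ge0 (I : finType) (f : I -> R) : 0 <= \big[Num.max/0]_i `|f i|.
Proof. by apply: (big_ind (fun x => 0 <= x)) => // a b ha hb; rewrite le_max ha. Qed.

Lemma fpnorm_ge0 p (I : finType) (f : I -> R) : 0 <= fpnorm p f.
Proof. by case: p => [r||] /=; [exact: powR_ge0 | exact: bigmax_normr_ge0 ..]. Qed.

Variable p : \bar R.
Hypothesis p1 : (1 <= p)%E.

Lemma ler_fpnorm (I : finType) (f g : I -> R) :
  (forall i, `|f i| <= `|g i|) -> fpnorm p f <= fpnorm p g.
Proof.
case/ge1_erealP: p1 => [[r r1 ->]|->] /= fg; last by apply: le_bigmax2 => i _.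
have r0 : 0 <= r by apply: le_trans r1.
apply: ge0_ler_powR; rewrite ?nnegrE ?invr_ge0 ?sum_powR_ge0 //.
by apply: ler_sum => i _; apply: ge0_ler_powR; rewrite ?nnegrE.
Qed.

Lemma eq_fpnorm_normr (I : finType) (f g : I -> R) :
  (forall i, `|f i| = `|g i|) -> fpnorm p f = fpnorm p g.
Proof. by move=> fg; apply/le_anti; rewrite !ler_fpnorm // => i; rewrite fg. Qed.

Lemma normr_le_fpnorm (I : finType) (f : I -> R) i : `|f i| <= fpnorm p f.
Proof.
case/ge1_erealP: p1 => [[r r1 ->]|->] /=; last exact: (le_bigmax _ (fun i => `|f i|)).
have r0 : r != 0 by rewrite gt_eqF // (lt_le_trans ltr01 r1).
rewrite -[X in X <= _](powRK r0 (normr_ge0 (f i))).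
apply: ge0_ler_powR;
  rewrite ?nnegrE ?powR_ge0 ?sum_powR_ge0 ?invr_ge0 ?(le_trans ler01 r1) //.
by rewrite (bigD1 i) //= lerDl; apply: sumr_ge0 => j _; apply: powR_ge0.
Qed.

Lemma fpnorm_eq0 (I : finType) (f : I -> R) i : fpnorm p f = 0 -> f i = 0.
Proof. by move=> f0; apply/normr0_eq0/le_anti; rewrite normr_ge0 -f0 normr_le_fpnorm. Qed.

Lemma fpnormZ (I : finType) (f : I -> R) a : 0 <= a ->
  fpnorm p (fun i => a * f i) = a * fpnorm p f.
Proof.
case/ge1_erealP: p1 => [[r r1 ->]|->] /= a0; last first.
  rewrite (big_morph (fun x => a * x) (id1 := 0) (op1 := Num.max)) ?mulr0 //.
    by apply: eq_bigr => i _; rewrite normrM ger0_norm.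
  by move=> x y; rewrite maxr_pMr.
have r0 : r != 0 by rewrite gt_eqF // (lt_le_trans ltr01 r1).
under eq_bigr do rewrite normrM ger0_norm // powRM //.
by rewrite -mulr_sumr powRM ?powR_ge0 ?sum_powR_ge0 ?powRK.
Qed.

Lemma ler_fpnormD (I : finType) (f g : I -> R) :
  fpnorm p (fun i => f i + g i) <= fpnorm p f + fpnorm p g.
Proof.
have [f0|fn0] := eqVneq (fpnorm p f) 0.
  by rewrite f0 add0r; apply: ler_fpnorm => i; rewrite (fpnorm_eq0 i f0) add0r.
have [g0|gn0] := eqVneq (fpnorm p g) 0.
  by rewrite g0 addr0; apply: ler_fpnorm => i; rewrite (fpnorm_eq0 i g0) addr0.
have fp : 0 < fpnorm p f by rewrite lt0r fn0 fpnorm_ge0.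
have gp : 0 < fpnorm p g by rewrite lt0r gn0 fpnorm_ge0.
case/ge1_erealP: p1 fp gp => [[r r1 ->]|->] /= fp gp; last first.
  apply: bigmax_le => [|i _]; first by rewrite addr_ge0 ?bigmax_normr_ge0.
  apply: (le_trans (ler_normD _ _)); apply: lerD.
    exact: (le_bigmax _ (fun i => `|f i|)).
  exact: (le_bigmax _ (fun i => `|g i|)).
have r0 : r != 0 by rewrite gt_eqF // (lt_le_trans ltr01 r1).
have Sf := esym (powRVK r0 (sum_powR_ge0 f r)).
have Sg := esym (powRVK r0 (sum_powR_ge0 g r)).
rewrite -[X in _ <= X](powRK r0 (addr_ge0 (ltW fp) (ltW gp))).
apply: ge0_ler_powR;
  rewrite ?nnegrE ?powR_ge0 ?sum_powR_ge0 ?invr_ge0 ?(le_trans ler01 r1) //.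
exact: (minkowski_powR_sum r1 fp gp Sf Sg).
Qed.

Lemma fpnorm_le_card (I : finType) (f : I -> R) (M : R) : 0 <= M ->
  (forall i, `|f i| <= M) -> fpnorm p f <= (#|I|%:R + 1) * M.
Proof.
move=> M0 fM; have k1 : 1 <= (#|I|%:R + 1 : R) by rewrite lerDr.
have k0 : 0 <= (#|I|%:R + 1 : R) := le_trans ler01 k1.
case/ge1_erealP: p1 => [[r r1 ->]|->] /=; last first.
  apply: bigmax_le => [|i _]; first by rewrite mulr_ge0.
  by apply: (le_trans (fM i)); rewrite ler_peMl.
have r0 : 0 < r by apply: lt_le_trans r1.
have rV0 : 0 <= r^-1 by rewrite invr_ge0 ltW.
apply: (le_trans (y := ((#|I|%:R + 1) * M `^ r) `^ r^-1)).
  apply: (ge0_ler_powR rV0); rewrite ?nnegrE ?mulr_ge0 ?powR_ge0 ?sum_powR_ge0 //.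
  apply: (le_trans (y := \sum_(i : I) M `^ r)).
    by apply: ler_sum => i _; apply: ge0_ler_powR; rewrite ?nnegrE // ltW.
  by rewrite sumr_const -[M `^ r *+ _]mulr_natl ler_wpM2r ?powR_ge0 // lerDl.
rewrite powRM ?powR_ge0 // powRK ?gt_eqF // ler_wpM2r //.
by rewrite -[X in _ <= X](powRr1 k0) ler_powR // invf_le1.
Qed.

Lemma bigmax_exchange_le (I J : finType) (g : I -> J -> R) :
  \big[Num.max/0]_i `|\big[Num.max/0]_j `|g i j| | <=
  \big[Num.max/0]_j `|\big[Num.max/0]_i `|g i j| |.
Proof.
apply: bigmax_le => [|i _]; first exact: bigmax_normr_ge0.
rewrite ger0_norm ?bigmax_normr_ge0 //.
apply: bigmax_le => [|j _]; first exact: bigmax_normr_ge0.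
apply: (le_trans (y := `|\big[Num.max/0]_i `|g i j| |)).
  by rewrite [X in _ <= X]ger0_norm ?bigmax_normr_ge0 // (le_bigmax _ (fun i => `|g i j|)).
exact: (le_bigmax _ (fun j => `|\big[Num.max/0]_i `|g i j| |)).
Qed.

Lemma fpnorm_exchange (I J : finType) (g : I -> J -> R) :
  fpnorm p (fun i => fpnorm p (g i)) = fpnorm p (fun j => fpnorm p (g^~ j)).
Proof.
case/ge1_erealP: p1 => [[r r1 ->]|->] /=; last by apply/le_anti; rewrite !bigmax_exchange_le.
have r0 : r != 0 by rewrite gt_eqF // (lt_le_trans ltr01 r1).
congr (_ `^ _); under eq_bigr do rewrite ger0_norm ?powR_ge0 // powRVK ?sum_powR_ge0 //.
rewrite exchange_big /=; apply: eq_bigr => j _.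
by rewrite ger0_norm ?powR_ge0 // powRVK ?sum_powR_ge0.
Qed.

(* Entrywise by Jensen's inequality, then summing with the column sums. *)
Lemma fpnorm_doubly_stochastic (m : nat) (P : 'I_m -> 'I_m -> R) (y : 'I_m -> R) :
  (forall i j, 0 <= P i j) -> (forall i, \sum_j P i j = 1) -> (forall j, \sum_i P i j = 1) ->
  fpnorm p (fun i => \sum_j P i j * y j) <= fpnorm p y.
Proof.
move=> P0 Prow Pcol.
have entry i : `|\sum_j P i j * y j| <= \sum_j P i j * `|y j|.
  apply: (le_trans (ler_norm_sum _ _ _)); apply: ler_sum => j _.
  by rewrite normrM ger0_norm.
case/ge1_erealP: p1 => [[r r1 ->]|->] /=; last first.
  apply: bigmax_le => [|i _]; first exact: bigmax_normr_ge0.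
  apply: (le_trans (entry i)).
  rewrite -[X in _ <= X]mul1r -(Prow i) mulr_suml ler_sum // => j _.
  exact/ler_wpM2l/(le_bigmax _ (fun j => `|y j|)).
have r0 : 0 <= r by apply: le_trans r1.
apply: ge0_ler_powR; rewrite ?nnegrE ?invr_ge0 ?sum_powR_ge0 //.
apply: (le_trans (y := \sum_i \sum_j P i j * `|y j| `^ r)).
  apply: ler_sum => i _.
  apply: (le_trans (y := (\sum_j P i j * `|y j|) `^ r)).
    apply: ge0_ler_powR; rewrite ?nnegrE ?entry //.
    by apply: sumr_ge0 => j _; rewrite mulr_ge0.
  by apply: jensen_powR; rewrite ?Prow.
by rewrite exchange_big /=; under eq_bigr do rewrite -mulr_suml Pcol mul1r.
Qed.

End FinitePNorm.

Section BlockNorm.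
Variables (R : realType) (p : \bar R) (n N : nat) (Q : 'M[R]_n).
Hypotheses (p1 : (1 <= p)%E) (dQ : is_diag_mx Q).

Lemma diag_mulmxE m (x : 'M[R]_(n, m)) k j : (Q *m x) k j = Q k k * x k j.
Proof.
rewrite mxE (bigD1 k) //= big1 ?addr0 // => l lk.
by rewrite (is_diag_mxP dQ) ?mul0r // eq_sym.
Qed.

Lemma pQnormE (x : 'cV[R]_n) : pQnorm p Q x = fpnorm p (fun k => Q k k * x k ord0).
Proof. by rewrite /pQnorm /pnorm; case: p => [r||]; under eq_bigr do rewrite diag_mulmxE. Qed.

Lemma pQnorm_ge0 (x : 'cV[R]_n) : 0 <= pQnorm p Q x.
Proof. exact: fpnorm_ge0. Qed.

Lemma pQnorm_gt0 (x : 'cV[R]_n) : (forall k, 0 < Q k k) -> x != 0 -> 0 < pQnorm p Q x.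
Proof.
move=> Q0 /eqP xn0; rewrite lt0r pQnormE fpnorm_ge0 andbT; apply/eqP => x0.
apply: xn0; apply/matrixP => k j; rewrite (ord1 j) mxE.
by have /eqP := fpnorm_eq0 p1 k x0; rewrite mulf_eq0 gt_eqF //= => /eqP.
Qed.

Lemma pQnorm0 : pQnorm p Q 0 = 0.
Proof.
apply/le_anti; rewrite pQnormE fpnorm_ge0 andbT.
apply: le_trans (fpnorm_le_card p1 (lexx 0) _) _ => [k|]; last by rewrite mulr0.
by rewrite mxE mulr0 normr0.
Qed.

Lemma blockQnormE (w : 'M[R]_(n, N)) :
  blockQnorm p Q w = fpnorm p (fun i => pQnorm p Q (col i w)).
Proof. by rewrite /blockQnorm /pnorm; case: p => [r||]; under eq_bigr do rewrite mxE. Qed.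

Lemma blockQnorm_entriesE (w : 'M[R]_(n, N)) :
  blockQnorm p Q w = fpnorm p (fun i => fpnorm p (fun k => Q k k * w k i)).
Proof.
rewrite blockQnormE; congr fpnorm; apply: funext => i.
by rewrite pQnormE; under eq_fun do rewrite mxE.
Qed.

Local Notation B := (blockQnorm p Q).

Lemma blockQnorm_ge0 (w : 'M[R]_(n, N)) : 0 <= B w.
Proof. by rewrite blockQnormE fpnorm_ge0. Qed.

Lemma ler_blockQnormD (w z : 'M[R]_(n, N)) : B (w + z) <= B w + B z.
Proof.
rewrite !blockQnorm_entriesE; apply: le_trans (ler_fpnormD p1 _ _).
apply: ler_fpnorm => // i; rewrite !ger0_norm ?addr_ge0 ?fpnorm_ge0 //.
apply: le_trans (ler_fpnormD p1 _ _); apply: ler_fpnorm => // k.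
by rewrite mxE mulrDr.
Qed.

Lemma blockQnormZ (w : 'M[R]_(n, N)) a : 0 <= a -> B (a *: w) = a * B w.
Proof.
move=> a0; rewrite !blockQnorm_entriesE -fpnormZ //; congr fpnorm; apply: funext => i.
by rewrite -fpnormZ //; congr fpnorm; apply: funext => k; rewrite mxE mulrCA.
Qed.

Lemma blockQnorm0 : B (0 : 'M[R]_(n, N)) = 0.
Proof. by have := blockQnormZ (0 : 'M[R]_(n, N)) (lexx 0); rewrite scale0r mul0r. Qed.

Lemma blockQnormN (w : 'M[R]_(n, N)) : B (- w) = B w.
Proof.
rewrite !blockQnorm_entriesE; congr fpnorm; apply: funext => i.
by apply: eq_fpnorm_normr => // k; rewrite mxE mulrN normrN.
Qed.

Lemma ler_dist_blockQnorm (w z : 'M[R]_(n, N)) : `|B w - B z| <= B (w - z).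
Proof.
have le_sub (x y : 'M[R]_(n, N)) : B x <= B y + B (x - y).
  by rewrite -[X in B X <= _](subrK y) addrC ler_blockQnormD.
have := le_sub w z; have := le_sub z w; rewrite -opprB blockQnormN.
by rewrite ler_norml; move=> *; apply/andP; split; lra.
Qed.

Lemma blockQnorm_le_mx_norm :
  exists2 C, 0 <= C & forall w : 'M[R]_(n, N), B w <= C * `|w|.
Proof.
pose S := \sum_k `|Q k k|; have S0 : 0 <= S by apply: sumr_ge0.
exists ((#|'I_N|%:R + 1) * ((#|'I_n|%:R + 1) * S)); first by rewrite !mulr_ge0.
move=> w; have Sw0 : 0 <= S * `|w| by rewrite mulr_ge0.
rewrite blockQnorm_entriesE -!mulrA.
apply: fpnorm_le_card => // [|i]; first by rewrite mulr_ge0.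
rewrite ger0_norm ?fpnorm_ge0 //; apply: fpnorm_le_card => // k.
rewrite normrM; apply: ler_pM => //; first by rewrite /S (bigD1 k) //= lerDl sumr_ge0.
have -> : `|w| = mx_norm w by [].
by rewrite mx_normrE (le_bigmax _ (fun ij : 'I_n * 'I_N => `|w ij.1 ij.2|) (k, i)).
Qed.

Lemma blockQnorm_cvg (T : Type) (F : set_system T) {FF : Filter F}
    (f : T -> 'M[R]_(n, N)) (w : 'M[R]_(n, N)) :
  f @ F --> w -> B (f x) @[x --> F] --> B w.
Proof.
move=> fw; have [C C0 BC] := blockQnorm_le_mx_norm.
apply/cvgrPdist_le => e e0.
have eC : 0 < e / (C + 1) by rewrite divr_gt0 // ltr_pwDr.
near=> x.
have : `|w - f x| < e / (C + 1) by near: x; exact: cvgr_dist_lt.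
rewrite ltr_pdivlMr ?ltr_pwDr // => wfx.
apply: le_trans (ler_dist_blockQnorm _ _) _; apply: le_trans (BC _) _.
have := normr_ge0 (w - f x); lra.
Unshelve. all: by end_near.
Qed.

End BlockNorm.

Section LaplacianContraction.
Variables (R : realType) (n N : nat) (D : 'M[R]_n) (L : 'M[R]_N).
Hypotheses (dD : is_diag_mx D) (D_ge0 : forall k, 0 <= D k k).
Hypothesis lapL : graph_laplacian L.

Lemma kron_applyE (w : 'M[R]_(n, N)) k i :
  kron_apply L D w k i = \sum_j L i j * D k k * w k j.
Proof.
rewrite mxE; apply: eq_bigr => j _; rewrite (bigD1 k) //= big1 ?addr0 // => l lk.
by rewrite (is_diag_mxP dD) ?mulr0 ?mul0r // eq_sym.
Qed.

Lemma laplacian_row_sum i : \sum_j L i j = 0.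
Proof.
case: lapL => _ _ /matrixP/(_ i ord0); rewrite !mxE => L1.
by rewrite -[RHS]L1; apply: eq_bigr => j _; rewrite ?mxE mulr1.
Qed.

Lemma laplacian_col_sum j : \sum_i L i j = 0.
Proof.
case: lapL => LT _ _; rewrite -[RHS](laplacian_row_sum j).
by apply: eq_bigr => i _; rewrite -[in LHS]LT mxE.
Qed.

Lemma laplacian_diag_ge0 i : 0 <= L i i.
Proof.
case: lapL => _ Loff _; move: (laplacian_row_sum i); rewrite (bigD1 i) //= => Li.
have : \sum_(j | j != i) L i j <= 0.
  by rewrite -oppr_ge0 -sumrN; apply: sumr_ge0 => j ji; rewrite oppr_ge0 Loff // eq_sym.
lra.
Qed.

(* On the [k]-th components of the blocks, [w - s (L ⊗ D) w] acts by the
   matrix [I - s d_k L], which is doubly stochastic for small [s]. *)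
Definition diffusion_step (s : R) (k : 'I_n) (i j : 'I_N) : R :=
  (i == j)%:R - s * D k k * L i j.

Lemma diffusion_stepE (w : 'M[R]_(n, N)) s k i :
  (w - s *: kron_apply L D w) k i = \sum_j diffusion_step s k i j * w k j.
Proof.
rewrite 3!mxE kron_applyE /diffusion_step.
under [RHS]eq_bigr do rewrite mulrBl.
have delta : \sum_j (i == j)%:R * w k j = w k i.
  rewrite (bigD1 i) //= big1 => [|j /negbTE ji]; last by rewrite eq_sym ji mul0r.
  by rewrite eqxx mul1r addr0.
by rewrite sumrB delta mulr_sumr; congr (_ - _); apply: eq_bigr => j _; ring.
Qed.

Lemma diffusion_step_row_sum s k i : \sum_j diffusion_step s k i j = 1.
Proof.
rewrite sumrB (bigD1 i) //= big1 => [|j /negbTE ji]; last by rewrite eq_sym ji.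
by rewrite eqxx addr0 -mulr_sumr laplacian_row_sum mulr0 subr0.
Qed.

Lemma diffusion_step_col_sum s k j : \sum_i diffusion_step s k i j = 1.
Proof.
rewrite sumrB (bigD1 j) //= big1 => [|i /negbTE ->] //.
by rewrite eqxx addr0 -mulr_sumr laplacian_col_sum mulr0 subr0.
Qed.

Lemma diffusion_step_ge0 s k i j : 0 <= s -> s * D k k * L i i <= 1 ->
  0 <= diffusion_step s k i j.
Proof.
move=> s0 sL; rewrite /diffusion_step; have [<-|ij] := eqVneq i j.
  by rewrite subr_ge0.
case: lapL => _ Loff _; rewrite sub0r oppr_ge0 mulr_ge0_le0 ?mulr_ge0 ?Loff //.
Qed.

Lemma blockQnorm_laplacian_contraction (p : \bar R) (Q : 'M[R]_n) :
  (1 <= p)%E -> is_diag_mx Q ->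
  exists2 s0, 0 < s0 & forall s (w : 'M[R]_(n, N)), 0 <= s <= s0 ->
    blockQnorm p Q (w - s *: kron_apply L D w) <= blockQnorm p Q w.
Proof.
move=> p1 dQ; pose T := 1 + \sum_k \sum_i D k k * L i i.
have DL_ge0 k i : 0 <= D k k * L i i by rewrite mulr_ge0 ?laplacian_diag_ge0.
have DL_le k i : D k k * L i i <= T.
  apply: le_trans (ler_wpDl ler01 (lexx _)).
  rewrite (bigD1 k) //= (bigD1 i) //= -addrA lerDl addr_ge0 ?sumr_ge0 // => k' _.
  by apply: sumr_ge0.
have T0 : 0 < T by rewrite ltr_pwDl // sumr_ge0 // => k _; apply: sumr_ge0.
exists T^-1 => [|s w /andP[s0 sT]]; first by rewrite invr_gt0.
have P_ge0 k i j : 0 <= diffusion_step s k i j.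
  apply: diffusion_step_ge0 => //; rewrite -mulrA.
  by apply: le_trans (ler_pM s0 (DL_ge0 k i) sT (DL_le k i)) _; rewrite mulVf ?gt_eqF.
rewrite !blockQnorm_entriesE // (fpnorm_exchange p1 (fun i k => Q k k * w k i)).
rewrite (fpnorm_exchange p1 (fun i k => Q k k * (w - s *: kron_apply L D w) k i)) /=.
apply: ler_fpnorm => // k; rewrite !ger0_norm ?fpnorm_ge0 //.
have -> : (fun i => Q k k * (w - s *: kron_apply L D w) k i) =
    (fun i => \sum_j diffusion_step s k i j * (Q k k * w k j)).
  apply: funext => i; rewrite diffusion_stepE mulr_sumr.
  by apply: eq_bigr => j _; rewrite mulrCA.
apply: fpnorm_doubly_stochastic => // [i|j].
  exact: diffusion_step_row_sum.
exact: diffusion_step_col_sum.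
Qed.

End LaplacianContraction.

Section RightNeighbourhoods.
Variable R : realType.

Lemma near_right0_ex (P : R -> Prop) : (\forall h \near 0^'+, P h) ->
  exists2 d : R, 0 < d & forall h, 0 < h -> h < d -> P h.
Proof.
rewrite near_withinE => /nbhs_ballP[e e0 Pe]; exists e => // h h0 he.
by apply: Pe => //; rewrite /ball /= sub0r normrN gtr0_norm.
Qed.

Lemma near_right0_mulr (P : R -> Prop) (a : R) : 0 < a ->
  (\forall h \near 0^'+, P h) -> \forall h \near 0^'+, P (a * h).
Proof.
move=> a0 /near_right0_ex[d d0 Pd]; near=> h; apply: Pd.
  by rewrite mulr_gt0 //; near: h; exact: nbhs_right_gt.
by rewrite -ltr_pdivlMl //; near: h; apply: nbhs_right_lt; rewrite mulr_gt0 ?invr_gt0.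
Unshelve. all: by end_near.
Qed.

Lemma near_right0_1DM_gt0 (a : R) : \forall h \near 0^'+, 0 < 1 + h * a.
Proof.
have : 1 + h * a @[h --> (0 : R)] --> 1 + 0 * a.
  by apply: cvgD; [exact: cvg_cst | apply: cvgM; [exact: cvg_id | exact: cvg_cst]].
by rewrite mul0r addr0 => /cvg_at_right_filter lim1; exact: (cvgr_gt _ lim1 _ ltr01).
Qed.

End RightNeighbourhoods.

Section Comparison.
Variable R : realType.

Lemma real_induction (P : R -> Prop) (T : R) : 0 <= T -> P 0 ->
  (forall s, 0 < s <= T -> (forall t, 0 <= t < s -> P t) -> P s) ->
  (forall s, 0 <= s < T -> P s -> \forall h \near 0^'+, P (s + h)) ->
  P T.
Proof.
move=> T0 P0 left_closed right_open.
pose S := [set s | 0 <= s <= T /\ forall t, 0 <= t <= s -> P t].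
have S0 : S 0.
  split=> [|t /andP[t0 t0']]; first by rewrite lexx T0.
  by have -> : t = 0 by apply/le_anti; rewrite t0 t0'.
have supS : has_sup S by split; [exists 0 | exists T => s [/andP[]]].
set sg := sup S.
have sg0 : 0 <= sg by exact: sup_upper_bound.
have sgT : sg <= T by apply: ge_sup => [|s [/andP[]]]; first by exists 0.
have below t : 0 <= t < sg -> P t.
  case/andP=> t0 tsg; have tp : 0 < sg - t by rewrite subr_gt0.
  have [s [_ Ps] /=] := sup_adherent tp supS.
  rewrite opprB addrC subrK => ts; apply: Ps; rewrite t0; exact: ltW.
have Psg : P sg.
  have [->|sg_neq0] := eqVneq sg 0; first exact: P0.
  by apply: left_closed => //; rewrite lt0r sg_neq0 sg0.
have [sgT'|Tsg] := ltP sg T; last by have <- : sg = T by apply/le_anti; rewrite sgT.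
have [d d0 Pd] := near_right0_ex (right_open sg (introT andP (conj sg0 sgT')) Psg).
pose h := Num.min d (T - sg) / 2.
have h0 : 0 < h by rewrite divr_gt0 // lt_min d0 subr_gt0.
have [hd hT] : h < d /\ h <= T - sg.
  have le1 : Num.min d (T - sg) <= d by rewrite ge_min lexx.
  have le2 : Num.min d (T - sg) <= T - sg by rewrite ge_min lexx orbT.
  have : 0 < Num.min d (T - sg) by rewrite lt_min d0 subr_gt0.
  by rewrite /h; split; lra.
have : S (sg + h).
  split=> [|t /andP[t0 tle]]; first by apply/andP; split; lra.
  have [tsg|sgt] := leP t sg.
    by move: tsg; rewrite le_eqVlt => /orP[/eqP ->|tsg] //; apply: below; rewrite t0.
  by rewrite -(subrKC sg t); apply: Pd; lra.
by move/(sup_upper_bound supS); rewrite -/sg; lra.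
Qed.

Lemma le_at_left_limit (phi g : R -> R) (s : R) : 0 < s ->
  phi x @[x --> s] --> phi s -> g x @[x --> s] --> g s ->
  (forall t, 0 <= t < s -> phi t <= g t) -> phi s <= g s.
Proof.
move=> s0 cphi cg le_before.
apply: ler_cvg_to (cvg_at_left_filter cphi) (cvg_at_left_filter cg) _.
near=> t; apply: le_before; apply/andP; split.
  by apply: ltW; near: t; exact: nbhs_left_gt.
by near: t; exact: nbhs_left_lt.
Unshelve. all: by end_near.
Qed.

(* Compare with [expR ((a + e) t) (phi 0 + e)] by real induction, then let [e]
   tend to [0]. *)
Lemma dini_exp_bound (phi : R -> R) (a T : R) : 0 <= T -> 0 <= phi 0 ->
  (forall s : R, 0 < s -> phi x @[x --> s] --> phi s) ->
  (forall s : R, 0 <= s -> forall e : R, 0 < e ->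
     \forall h \near 0^'+, phi (s + h) <= (1 + h * a) * phi s + h * e) ->
  phi T <= expR (a * T) * phi 0.
Proof.
move=> T0 phi0 cphi dini.
pose g e x := expR ((a + e) * x) * (phi 0 + e).
have cont_g e x : g e y @[y --> x] --> g e x.
  apply: cvgM; last exact: cvg_cst.
  apply: (continuous_comp (f := fun y => (a + e) * y)).
    by apply: cvgM; [exact: cvg_cst | exact: cvg_id].
  exact: continuous_expR.
have bound e : 0 < e -> phi T <= g e T.
  move=> e0; apply: (@real_induction (fun x => phi x <= g e x) T T0).
  - by rewrite /g mulr0 expR0 mul1r lerDl ltW.
  - by move=> s /andP[s0 _]; apply: le_at_left_limit s0 (cphi s s0) (cont_g e s).
  move=> s /andP[s0 _] phig.
  have g_gt0 : 0 < g e s by rewrite /g mulr_gt0 ?expR_gt0 ?ltr_pwDr.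
  have e_g : 0 < e * g e s by rewrite mulr_gt0.
  have := near_right0_1DM_gt0 a; have := dini s s0 _ e_g.
  apply: filterS2 => h dini_h h_pos.
  apply: le_trans dini_h _.
  have -> : g e (s + h) = g e s * expR ((a + e) * h).
    by rewrite /g (mulrDr (a + e) s h) expRD mulrAC.
  apply: le_trans (ler_wpM2l (ltW g_gt0) (expR_ge1Dx ((a + e) * h))).
  have := ler_wpM2l (ltW h_pos) phig; nra.
have lim : g e T @[e --> 0^'+] --> expR (a * T) * phi 0.
  have : g e T @[e --> (0 : R)] --> g 0 T.
    apply: cvgM; last by apply: cvgD; [exact: cvg_cst | exact: cvg_id].
    apply: (continuous_comp (f := fun e => (a + e) * T)); last exact: continuous_expR.
    by apply: cvgM; [apply: cvgD; [exact: cvg_cst | exact: cvg_id] | exact: cvg_cst].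
  by rewrite /g !addr0 => /cvg_at_right_filter.
apply: ler_cvg_to (cvg_cst (phi T)) lim _.
by near=> e; apply: bound; near: e; exact: nbhs_right_gt.
Unshelve. all: by end_near.
Qed.

End Comparison.

Section EulerStep.
Variables (R : realType) (p : \bar R) (n N : nat) (Q : 'M[R]_n).
Variables (V : set 'cV[R]_n) (F : 'cV[R]_n -> 'cV[R]_n) (c : R).
Hypotheses (p1 : (1 <= p)%E) (pQ : pos_diag Q) (hc : logLip_eq p Q V F c).

Lemma logLip_step e : 0 < e -> \forall h \near 0^'+, forall x y, V x -> V y ->
  pQnorm p Q (x - y + h *: (F x - F y)) <= (1 + h * (c + e)) * pQnorm p Q (x - y).
Proof.
move=> e0; case/fine_cvgP: hc => fin_quot cv_quot.
have lt_quot : \forall h \near 0^'+, fine (logLip_quot p Q V F h) < c + e.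
  by apply: (cvgr_lt c cv_quot); rewrite ltrDl.
case: pQ => dQ Q0; near=> h => x y Vx Vy.
have [<-|xy] := eqVneq x y; first by rewrite !subrr scaler0 addr0 pQnorm0 ?mulr0.
have N0 : 0 < pQnorm p Q (x - y) by apply: pQnorm_gt0; rewrite ?subr_eq0.
set N1 := pQnorm p Q _ in N0 *; set N2 := pQnorm p Q (x - y + _).
have h0 : 0 < h by near: h; exact: nbhs_right_gt.
have : ((h^-1 * (N2 / N1 - 1))%:E <= logLip_quot p Q V F h)%E.
  by apply: ereal_sup_ubound; exists x, y.
have fin_h : logLip_quot p Q V F h \is a fin_num by near: h.
have lt_h : fine (logLip_quot p Q V F h) < c + e by near: h.
rewrite -(fineK fin_h) lee_fin ler_pdivrMl // => quot_le.
rewrite -ler_pdivrMr // (le_trans (y := 1 + h * fine (logLip_quot p Q V F h))) //.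
  by rewrite -lerBlDl.
by rewrite lerD2l ler_pM2l // ltW.
Unshelve. all: by end_near.
Qed.

Lemma colB m (U W : 'M[R]_(m, N)) i : col i (U - W) = col i U - col i W.
Proof. by apply/matrixP => k j; rewrite !mxE. Qed.

Lemma colE_Ftilde_step (U W : 'M[R]_(n, N)) h i :
  col i (U - W + h *: (Ftilde F U - Ftilde F W)) =
  col i U - col i W + h *: (F (col i U) - F (col i W)).
Proof. by apply/matrixP => k j; rewrite (ord1 j) !mxE. Qed.

Lemma blockQnorm_Ftilde_step e : 0 < e -> \forall h \near 0^'+,
  forall U W : 'M[R]_(n, N), (forall i, V (col i U)) -> (forall i, V (col i W)) ->
  blockQnorm p Q (U - W + h *: (Ftilde F U - Ftilde F W)) <=
    (1 + h * (c + e)) * blockQnorm p Q (U - W).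
Proof.
move=> e0; have step := logLip_step e0; have pos := near_right0_1DM_gt0 (c + e).
near=> h => U W VU VW.
have h_pos : 0 < 1 + h * (c + e) by near: h.
have step_h : forall x y, V x -> V y -> pQnorm p Q (x - y + h *: (F x - F y)) <=
    (1 + h * (c + e)) * pQnorm p Q (x - y) by near: h.
rewrite !blockQnormE -fpnormZ ?(ltW h_pos) //; apply: ler_fpnorm => // i.
rewrite colE_Ftilde_step !ger0_norm ?mulr_ge0 ?pQnorm_ge0 ?(ltW h_pos) //.
by rewrite colB; apply: step_h.
Unshelve. all: by end_near.
Qed.

Variables (D : 'M[R]_n) (L : 'M[R]_N).
Hypotheses (pD : pos_diag D) (lapL : graph_laplacian L).

Lemma kron_applyB (U W : 'M[R]_(n, N)) :
  kron_apply L D (U - W) = kron_apply L D U - kron_apply L D W.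
Proof.
apply/matrixP => k i; rewrite !mxE -sumrB; apply: eq_bigr => j _.
by rewrite -sumrB; apply: eq_bigr => l _; rewrite !mxE; ring.
Qed.

Lemma rhs_step_split (U W : 'M[R]_(n, N)) h :
  U - W + h *: (rhs F L D U - rhs F L D W) =
  2^-1 *: (U - W + (2 * h) *: (Ftilde F U - Ftilde F W)) +
  2^-1 *: ((U - W) - (2 * h) *: kron_apply L D (U - W)).
Proof. by rewrite kron_applyB; apply/matrixP => k i; rewrite !mxE; field. Qed.

Lemma blockQnorm_rhs_step e : 0 < e -> \forall h \near 0^'+,
  forall U W : 'M[R]_(n, N), (forall i, V (col i U)) -> (forall i, V (col i W)) ->
  blockQnorm p Q (U - W + h *: (rhs F L D U - rhs F L D W)) <=
    (1 + h * (c + e)) * blockQnorm p Q (U - W).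
Proof.
move=> e0; case: pD => dD D0; case: (pQ) => dQ _.
have [s0 s0_gt0 contract] :=
  blockQnorm_laplacian_contraction dD (fun k => ltW (D0 k)) lapL p1 dQ.
have two_gt0 : (0 : R) < 2 by [].
have step2 := near_right0_mulr two_gt0 (blockQnorm_Ftilde_step e0).
have small2 := near_right0_mulr two_gt0 (nbhs_right_lt s0_gt0).
near=> h.
have h0 : 0 < h by near: h; exact: nbhs_right_gt.
have hs0 : 2 * h < s0 by near: h.
have reaction : forall U W : 'M[R]_(n, N),
    (forall i, V (col i U)) -> (forall i, V (col i W)) ->
    blockQnorm p Q (U - W + (2 * h) *: (Ftilde F U - Ftilde F W)) <=
    (1 + 2 * h * (c + e)) * blockQnorm p Q (U - W) by near: h.
move=> U W VU VW; have reac := reaction _ _ VU VW.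
have diff : blockQnorm p Q ((U - W) - (2 * h) *: kron_apply L D (U - W)) <=
    blockQnorm p Q (U - W).
  by apply: contract; apply/andP; split; [rewrite mulr_ge0 // ltW | exact: ltW].
have Bw0 : 0 <= blockQnorm p Q (U - W) by exact: blockQnorm_ge0.
rewrite rhs_step_split; apply: le_trans (ler_blockQnormD p1 dQ _ _) _.
rewrite !blockQnormZ ?invr_ge0 ?ler0n //.
lra.
Unshelve. all: by end_near.
Qed.

End EulerStep.

Section OdeSolution.
Variables (R : realType) (n N : nat) (V : set 'cV[R]_n) (F : 'cV[R]_n -> 'cV[R]_n).
Variables (L : 'M[R]_N) (D : 'M[R]_n) (u : R -> 'M[R]_(n, N)).
Hypothesis hu : is_ode_solution V F L D u.

Lemma ode_solution_right_deriv (t : R) : 0 <= t ->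
  h^-1 *: (u (t + h) - u t) @[h --> 0^'+] --> rhs F L D (u t).
Proof.
case: hu => _ deriv_pos deriv0; rewrite le_eqVlt => /orP[/eqP <-|t0].
  by under eq_fun do rewrite add0r.
have [du <-] := deriv_pos t t0.
have -> : (fun h => h^-1 *: (u (t + h) - u t)) =
    (fun h => h^-1 *: ((u \o shift t) (h *: 1) - u t)).
  by apply: funext => h /=; rewrite (_ : h *: 1 = h) ?(addrC h t) //; exact: mulr1.
exact: cvg_dnbhs_at_right du.
Qed.

Lemma ode_solution_cvg (t : R) : 0 < t -> u x @[x --> t] --> u t.
Proof.
case: hu => _ deriv_pos _ t0; have [du _] := deriv_pos t t0.
exact: differentiable_continuous ((derivable1_diffP u t).1 du).
Qed.

End OdeSolution.

Section SolutionDistance.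
Variables (R : realType) (n N : nat) (V : set 'cV[R]_n) (F : 'cV[R]_n -> 'cV[R]_n).
Variables (D : 'M[R]_n) (L : 'M[R]_N) (p : \bar R) (Q : 'M[R]_n) (c : R).
Variables (u v : R -> 'M[R]_(n, N)).
Hypotheses (pD : pos_diag D) (lapL : graph_laplacian L) (p1 : (1 <= p)%E).
Hypotheses (pQ : pos_diag Q) (hc : logLip_eq p Q V F c).
Hypotheses (hu : is_ode_solution V F L D u) (hv : is_ode_solution V F L D v).

Lemma blockQnorm_solution_dini (s : R) : 0 <= s -> forall eps : R, 0 < eps ->
  \forall h \near 0^'+, blockQnorm p Q (u (s + h) - v (s + h)) <=
    (1 + h * c) * blockQnorm p Q (u s - v s) + h * eps.
Proof.
move=> s0 eps eps0; case: (pQ) => dQ _; case: (hu) => Vu _ _; case: (hv) => Vv _ _.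
pose w := u s - v s.
pose r := rhs F L D (u s) - rhs F L D (v s).
pose q h := h^-1 *: (u (s + h) - u s) - h^-1 *: (v (s + h) - v s).
have Bw0 : 0 <= blockQnorm p Q w by exact: blockQnorm_ge0.
have rem : \forall h \near 0^'+, blockQnorm p Q (q h - r) < eps / 2.
  have : blockQnorm p Q (q h - r) @[h --> 0^'+] --> blockQnorm p Q (r - r).
    apply: blockQnorm_cvg => //; apply: cvgB (cvg_cst r).
    by apply: cvgB; [exact (ode_solution_right_deriv hu s0) |
                     exact (ode_solution_right_deriv hv s0)].
  by rewrite subrr (blockQnorm0 N p1 dQ) => /cvgr_lt; apply; rewrite divr_gt0.
pose e := eps / (2 * (blockQnorm p Q w + 1)).
have e0 : 0 < e by rewrite divr_gt0 // mulr_gt0 // ltr_pwDr.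
have eBw : e * blockQnorm p Q w <= eps / 2.
  by rewrite /e mulrAC ler_pdivrMr ?mulr_gt0 ?ltr_pwDr //; lra.
have step := blockQnorm_rhs_step p1 pQ hc pD lapL e0.
near=> h.
have h0 : 0 < h by near: h; exact: nbhs_right_gt.
have step_h : blockQnorm p Q (w + h *: r) <= (1 + h * (c + e)) * blockQnorm p Q w.
  by near: h; apply: filterS step => h; apply; [exact: Vu | exact: Vv].
have rem_h : blockQnorm p Q (q h - r) < eps / 2 by near: h.
have -> : u (s + h) - v (s + h) = (w + h *: r) + h *: (q h - r).
  apply/matrixP => k i; rewrite !mxE; field; exact: lt0r_neq0.
apply: le_trans (ler_blockQnormD p1 dQ _ _) _; rewrite blockQnormZ ?(ltW h0) //.
have := ler_wpM2l (ltW h0) eBw; have := ler_wpM2l (ltW h0) (ltW rem_h).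
rewrite -/w; lra.
Unshelve. all: by end_near.
Qed.

End SolutionDistance.

(* Convexity of [V] and the Lipschitz bound on [F] only serve the existence
   and uniqueness of solutions; the estimate itself does not use them. *)
Theorem theorem4 (R : realType) (n N : nat) (V : set 'cV[R]_n)
  (F : 'cV[R]_n -> 'cV[R]_n) (D : 'M[R]_n) (L : 'M[R]_N)
  (p : \bar R) (Q : 'M[R]_n) (c : R) (u v : R -> 'M[R]_(n, N)) :
  convex_subset V ->
  glob_lipschitz_on V F ->
  pos_diag D ->
  graph_laplacian L ->
  (1 <= p)%E ->
  pos_diag Q ->
  logLip_eq p Q V F c ->
  is_ode_solution V F L D u ->
  is_ode_solution V F L D v ->
  forall t : R, 0 <= t ->
    blockQnorm p Q (u t - v t) <= expR (c * t) * blockQnorm p Q (u 0 - v 0).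
Proof.
move=> _ _ pD lapL p1 pQ hc hu hv t t0.
have dQ : is_diag_mx Q by case: pQ.
apply: (dini_exp_bound (phi := fun t => blockQnorm p Q (u t - v t))) => //.
- exact: blockQnorm_ge0.
- move=> s s0; apply: (blockQnorm_cvg p1 dQ).
  by apply: cvgB; [exact (ode_solution_cvg hu s0) | exact (ode_solution_cvg hv s0)].
- by move=> s s0; exact (blockQnorm_solution_dini pD lapL p1 pQ hc hu hv s0).
Qed.
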